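(* Let $\|\cdot\|$ be a $C^2$ and strictly convex norm on $\mathbb{R}^2$. There exists a constant $C>0$ depending only on $\|\cdot\|$ such that for every interval $I\subset\mathbb{R}$ and every $\|\cdot\|$-self-contracted curve $\gamma:I\to\mathbb{R}^2$, $$\ell(\gamma)\leq C\,\mathrm{diam}(K(\gamma)),$$ where $\ell(\gamma)$ is the length of $\gamma$, $K(\gamma)$ is the closed convex hull of the image $\gamma(I)$, and $\mathrm{diam}$ is the diameter. In particular, every bounded $\|\cdot\|$-self-contracted curve has finite length.
   Context: $|\cdot|$ denotes the Euclidean norm on $\mathbb{R}^2$; lengths and diameters are computed with it (all norms on $\mathbb{R}^2$ being equivalent, this only affects the constant). A curve is any map $\gamma:I\to\mathbb{R}^2$ from an interval $I\subset\mathbb{R}$, not necessarily continuous. Its length is $\ell(\gamma)=\sup\sum_{i=0}^{m-1}|\gamma(t_i)-\gamma(t_{i+1})|$, the supremum over all finite increasing sequences $t_0<t_1<\dots<t_m$ in $I$. A curve $\gamma:I\to\mathbb{R}^2$ is $\|\cdot\|$-self-contracted if for every $[a,b]\subset I$ the function $t\mapsto\|\gamma(t)-\gamma(b)\|$ is non-increasing on $[a,b]$. The norm is called $C^2$ if $x\mapsto\|x\|$ is $C^2$ on $\mathbb{R}^2\setminus\{0\}$, and $C^2$ and strictly convex if moreover the unit sphere $\{\|x\|=1\}$ is a $C^2$ curve with strictly positive curvature (equivalently $D^2\|x\|(h,h)>0$ for all $x\neq0$ and all $h$ not parallel to $x$); in particular the unit ball is strictly convex (its boundary contains no nontrivial segment).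 *)

From Stdlib Require Import Reals Lra List Sorted.
From Coquelicot Require Import Coquelicot.
Open Scope R_scope.

Definition vadd (p q : R * R) : R * R := (fst p + fst q, snd p + snd q).
Definition vsub (p q : R * R) : R * R := (fst p - fst q, snd p - snd q).
Definition vscal (t : R) (p : R * R) : R * R := (t * fst p, t * snd p).

Definition eucl (p : R * R) : R := sqrt (fst p ^ 2 + snd p ^ 2).

Definition is_norm (N : R * R -> R) : Prop :=
  (forall p, N p = 0 <-> p = (0, 0)) /\
  (forall t p, N (vscal t p) = Rabs t * N p) /\
  (forall p q, N (vadd p q) <= N p + N q).

Definition d1 (f : R * R -> R) (p : R * R) : R := Derive (fun t => f (t, snd p)) (fst p).
Definition d2 (f : R * R -> R) (p : R * R) : R := Derive (fun t => f (fst p, t)) (snd p).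
Definition ex_d1 (f : R * R -> R) (p : R * R) : Prop := ex_derive (fun t => f (t, snd p)) (fst p).
Definition ex_d2 (f : R * R -> R) (p : R * R) : Prop := ex_derive (fun t => f (fst p, t)) (snd p).

Definition C2_away_from_0 (f : R * R -> R) : Prop :=
  forall p, p <> (0, 0) ->
    ex_d1 f p /\ ex_d2 f p /\
    ex_d1 (d1 f) p /\ ex_d2 (d1 f) p /\ ex_d1 (d2 f) p /\ ex_d2 (d2 f) p /\
    continuous f p /\ continuous (d1 f) p /\ continuous (d2 f) p /\
    continuous (d1 (d1 f)) p /\ continuous (d2 (d1 f)) p /\
    continuous (d1 (d2 f)) p /\ continuous (d2 (d2 f)) p.

Definition D2 (f : R * R -> R) (x h : R * R) : R :=
  fst h ^ 2 * d1 (d1 f) x + fst h * snd h * (d2 (d1 f) x + d1 (d2 f) x)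
  + snd h ^ 2 * d2 (d2 f) x.

Definition parallel (h x : R * R) : Prop := fst h * snd x - snd h * fst x = 0.

Definition C2_strictly_convex_norm (N : R * R -> R) : Prop :=
  is_norm N /\ C2_away_from_0 N /\
  (forall x h, x <> (0, 0) -> ~ parallel h x -> D2 N x h > 0).

Definition is_interval (I : R -> Prop) : Prop :=
  forall a b c, I a -> I b -> a <= c <= b -> I c.

Definition self_contracted (N : R * R -> R) (I : R -> Prop) (gamma : R -> R * R) : Prop :=
  forall a b, a <= b -> (forall c, a <= c <= b -> I c) ->
    forall s t, a <= s -> s <= t -> t <= b ->
      N (vsub (gamma t) (gamma b)) <= N (vsub (gamma s) (gamma b)).

Fixpoint poly_sum (gamma : R -> R * R) (l : list R) : R :=
  match l with
  | t0 :: ((t1 :: _) as l') => eucl (vsub (gamma t0) (gamma t1)) + poly_sum gamma l'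
  | _ => 0
  end.

Definition curve_length (I : R -> Prop) (gamma : R -> R * R) : Rbar :=
  Lub_Rbar (fun s => exists l : list R,
     StronglySorted Rlt l /\ List.Forall (fun t : R => I t) l /\ s = poly_sum gamma l).

Definition convex_set (S : R * R -> Prop) : Prop :=
  forall p q lam, S p -> S q -> 0 <= lam <= 1 ->
    S (vadd (vscal lam p) (vscal (1 - lam) q)).

Definition closed_convex_hull_image (I : R -> Prop) (gamma : R -> R * R) (p : R * R) : Prop :=
  forall S : R * R -> Prop, closed S -> convex_set S ->
    (forall t, I t -> S (gamma t)) -> S p.

(* Euclidean diameter (convention diam(empty) = 0) *)
Definition diam (K : R * R -> Prop) : Rbar :=
  Lub_Rbar (fun d => d = 0 \/ exists p q, K p /\ K q /\ d = eucl (vsub p q)).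

From Stdlib Require Import Reals Lra Lia List Sorted.
From Coquelicot Require Import Coquelicot.
Open Scope R_scope.

(* Let [x_0, ..., x_n] be points of a self-contracted curve, in order.  Since [N]
   is equivalent to the Euclidean norm, [N (x_l - x_k) <= N (x_l - x_j)] for
   [j <= k <= l] keeps the angle between [x_k - x_j] and [x_l - x_j] away from [pi];
   together with the contraction towards the last point [x_n] this puts all the
   vectors [x_k - x_j], [k > j], in a cone of aperture less than [pi]: some [u]
   of bounded size has [(x_k - x_j) . u >= eps |x_k - x_j|].  The potential
   [Phi j = sum_w max_(k >= j) x_k . w], over a fixed finite grid of directions
   [w], is then nonincreasing and drops by at least [kappa |x_(j+1) - x_j|] at
   step [j] (take [w] close to [-u]), while [Phi 0 - Phi n <= C' diam].  Hence the
   polygon has length at most [C' / kappa diam]. *)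

Definition dot (p q : R * R) : R := fst p * fst q + snd p * snd q.
Definition det (p q : R * R) : R := fst p * snd q - snd p * fst q.
Definition perp (p : R * R) : R * R := (- snd p, fst p).

Lemma vec_eq_dec (p q : R * R) : {p = q} + {p <> q}.
Proof. decide equality; apply Req_EM_T. Qed.

Lemma eucl_sq p : eucl p ^ 2 = fst p ^ 2 + snd p ^ 2.
Proof. unfold eucl. rewrite <- Rsqr_pow2, Rsqr_sqrt; [ring | nra]. Qed.

Lemma eucl_ge0 p : 0 <= eucl p.
Proof. apply sqrt_pos. Qed.

Lemma eucl_00 : eucl (0, 0) = 0.
Proof. unfold eucl; cbn [fst snd]. replace (0 ^ 2 + 0 ^ 2) with 0 by ring. apply sqrt_0. Qed.

Lemma Rabs_fst_le_eucl p : Rabs (fst p) <= eucl p.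
Proof.
  apply Rsqr_incr_0_var; [| apply eucl_ge0].
  rewrite <- Rsqr_abs, !Rsqr_pow2, eucl_sq. nra.
Qed.

Lemma Rabs_snd_le_eucl p : Rabs (snd p) <= eucl p.
Proof.
  apply Rsqr_incr_0_var; [| apply eucl_ge0].
  rewrite <- Rsqr_abs, !Rsqr_pow2, eucl_sq. nra.
Qed.

Lemma eucl_le_l1 p : eucl p <= Rabs (fst p) + Rabs (snd p).
Proof.
  pose proof (Rabs_pos (fst p)); pose proof (Rabs_pos (snd p)).
  apply Rsqr_incr_0_var; [| lra].
  pose proof (pow2_abs (fst p)); pose proof (pow2_abs (snd p)).
  rewrite !Rsqr_pow2, eucl_sq. nra.
Qed.

Lemma eucl_eq0 p : eucl p = 0 -> p = (0, 0).
Proof.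
  intro H. pose proof (eucl_sq p) as E. rewrite H in E. destruct p as [a b]; simpl in E.
  f_equal; nra.
Qed.

Lemma eucl_gt0 p : p <> (0, 0) -> 0 < eucl p.
Proof.
  intro H. destruct (eucl_ge0 p) as [| E]; auto. exfalso. apply H, eucl_eq0. auto.
Qed.

Lemma eucl_vsub_comm p q : eucl (vsub p q) = eucl (vsub q p).
Proof. unfold eucl, vsub; simpl. f_equal. ring. Qed.

Lemma eucl_perp p : eucl (perp p) = eucl p.
Proof. unfold eucl, perp; simpl. f_equal. ring. Qed.

Lemma dot_comm p q : dot p q = dot q p.
Proof. unfold dot; ring. Qed.

Lemma dot_le_eucl_l1 d w : dot d w <= eucl d * (Rabs (fst w) + Rabs (snd w)).
Proof.
  unfold dot.
  pose proof (Rle_abs (fst d * fst w)); pose proof (Rle_abs (snd d * snd w)).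
  rewrite Rabs_mult in *.
  pose proof (Rabs_fst_le_eucl d); pose proof (Rabs_snd_le_eucl d).
  pose proof (Rabs_pos (fst w)); pose proof (Rabs_pos (snd w)).
  pose proof (Rabs_pos (fst d)); pose proof (Rabs_pos (snd d)). nra.
Qed.

Lemma dot_sq_add_det_sq p q : dot p q ^ 2 + det p q ^ 2 = (eucl p * eucl q) ^ 2.
Proof. rewrite Rpow_mult_distr, !eucl_sq. unfold dot, det. ring. Qed.

Lemma Rabs_dot_le p q : Rabs (dot p q) <= eucl p * eucl q.
Proof.
  apply Rsqr_incr_0_var; [| apply Rmult_le_pos; apply eucl_ge0].
  rewrite <- Rsqr_abs, !Rsqr_pow2. pose proof (dot_sq_add_det_sq p q). nra.
Qed.

Lemma dot_frame c z z' : eucl c ^ 2 * dot z z' = dot c z * dot c z' + det c z * det c z'.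
Proof. rewrite eucl_sq; unfold dot, det; ring. Qed.

Lemma det_frame c z z' : eucl c ^ 2 * det z z' = dot c z * det c z' - det c z * dot c z'.
Proof. rewrite eucl_sq; unfold dot, det; ring. Qed.

Lemma det_eq0_colinear c w : c <> (0, 0) -> det c w = 0 ->
  w = vscal (dot c w / eucl c ^ 2) c.
Proof.
  intros Hc Hd. pose proof (eucl_gt0 c Hc) as Hpos.
  assert (Hc2 : 0 < eucl c ^ 2) by nra. rewrite eucl_sq in *.
  destruct c as [a b], w as [x y]; unfold det, dot, vscal in *; simpl in *. f_equal.
  - transitivity ((a * (a * x + b * y) - b * (a * y - b * x)) / (a ^ 2 + b ^ 2));
      [field; lra | rewrite Hd; field; lra].
  - transitivity ((b * (a * x + b * y) + a * (a * y - b * x)) / (a ^ 2 + b ^ 2));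
      [field; lra | rewrite Hd; field; lra].
Qed.

(** * Norms on the plane *)

Section NormOnPlane.
Variable N : R * R -> R.
Hypothesis HN : is_norm N.

Lemma norm_eq0 p : N p = 0 <-> p = (0, 0).
Proof. apply HN. Qed.

Lemma norm_scal t p : N (vscal t p) = Rabs t * N p.
Proof. apply HN. Qed.

Lemma norm_triangle p q : N (vadd p q) <= N p + N q.
Proof. apply HN. Qed.

Lemma norm_00 : N (0, 0) = 0.
Proof. apply norm_eq0. reflexivity. Qed.

Lemma norm_opp p : N (vscal (-1) p) = N p.
Proof. rewrite norm_scal, Rabs_m1. ring. Qed.

Lemma norm_ge0 p : 0 <= N p.
Proof.
  pose proof (norm_triangle p (vscal (-1) p)) as H.
  replace (vadd p (vscal (-1) p)) with (0, 0) in H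
    by (unfold vadd, vscal; simpl; f_equal; ring).
  rewrite norm_00, norm_opp in H. lra.
Qed.

Lemma norm_gt0 p : p <> (0, 0) -> 0 < N p.
Proof.
  intro H. destruct (norm_ge0 p) as [| E]; auto. exfalso. apply H, norm_eq0. auto.
Qed.

Lemma norm_vsub_comm p q : N (vsub p q) = N (vsub q p).
Proof.
  rewrite <- norm_opp. f_equal. unfold vsub, vscal; simpl; f_equal; ring.
Qed.

Definition norm_ub : R := N (1, 0) + N (0, 1) + 1.

Lemma norm_ub_gt0 : 0 < norm_ub.
Proof. unfold norm_ub. pose proof (norm_ge0 (1, 0)); pose proof (norm_ge0 (0, 1)). lra. Qed.

Lemma norm_le_eucl p : N p <= norm_ub * eucl p.
Proof.
  assert (E : p = vadd (vscal (fst p) (1, 0)) (vscal (snd p) (0, 1)))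
    by (destruct p; unfold vadd, vscal; simpl; f_equal; ring).
  pose proof (norm_triangle (vscal (fst p) (1, 0)) (vscal (snd p) (0, 1))) as H.
  rewrite <- E, !norm_scal in H.
  pose proof (Rabs_fst_le_eucl p); pose proof (Rabs_snd_le_eucl p); pose proof (eucl_ge0 p).
  pose proof (norm_ge0 (1, 0)); pose proof (norm_ge0 (0, 1)).
  pose proof (Rabs_pos (fst p)); pose proof (Rabs_pos (snd p)).
  unfold norm_ub. nra.
Qed.

Lemma norm_line_lipschitz a b s s' :
  Rabs (N (vadd a (vscal s b)) - N (vadd a (vscal s' b))) <= Rabs (s - s') * N b.
Proof.
  assert (E1 : vadd a (vscal s b) = vadd (vadd a (vscal s' b)) (vscal (s - s') b))
    by (unfold vadd, vscal; simpl; f_equal; ring).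
  assert (E2 : vadd a (vscal s' b) = vadd (vadd a (vscal s b)) (vscal (s' - s) b))
    by (unfold vadd, vscal; simpl; f_equal; ring).
  pose proof (norm_triangle (vadd a (vscal s' b)) (vscal (s - s') b)) as H1.
  pose proof (norm_triangle (vadd a (vscal s b)) (vscal (s' - s) b)) as H2.
  rewrite <- E1 in H1. rewrite <- E2 in H2. rewrite !norm_scal in *.
  rewrite Rabs_minus_sym in H2. apply Rabs_le. lra.
Qed.

Lemma norm_line_continuous a b x : continuity_pt (fun s => N (vadd a (vscal s b))) x.
Proof.
  intros eps Heps. pose proof (norm_ge0 b) as Hb.
  exists (eps / (N b + 1)). split; [apply Rdiv_lt_0_compat; lra |].
  intros y [_ Hy]. simpl in *. unfold R_dist in *.
  eapply Rle_lt_trans; [apply norm_line_lipschitz |].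
  apply Rle_lt_trans with (Rabs (y - x) * (N b + 1));
    [pose proof (Rabs_pos (y - x)); nra |].
  apply Rmult_lt_reg_r with (/ (N b + 1)); [apply Rinv_0_lt_compat; lra |].
  rewrite Rmult_assoc, Rinv_r by lra. lra.
Qed.

Lemma norm_segment_lower a b : (forall s, 0 <= s <= 1 -> vadd a (vscal s b) <> (0, 0)) ->
  exists m, 0 < m /\ forall s, 0 <= s <= 1 -> m <= N (vadd a (vscal s b)).
Proof.
  intro Hnz.
  destruct (continuity_ab_min (fun s => N (vadd a (vscal s b))) 0 1) as [s0 [Hmin Hs0]];
    [lra | intros; apply norm_line_continuous |].
  exists (N (vadd a (vscal s0 b))). split; auto. apply norm_gt0, Hnz; auto.
Qed.

Lemma norm_l1_sphere_lower : exists m, 0 < m /\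
  forall a b, 0 <= a -> a + Rabs b = 1 -> m <= N (a, b).
Proof.
  destruct (norm_segment_lower (1, 0) (-1, 1)) as [m1 [Hm1 H1]].
  { intros s Hs E. unfold vadd, vscal in E; simpl in E. injection E. lra. }
  destruct (norm_segment_lower (1, 0) (-1, -1)) as [m2 [Hm2 H2]].
  { intros s Hs E. unfold vadd, vscal in E; simpl in E. injection E. lra. }
  exists (Rmin m1 m2). split; [apply Rmin_glb_lt; auto |].
  intros a b Ha Hab. pose proof (Rabs_pos b).
  assert (Hs : 0 <= Rabs b <= 1) by lra.
  destruct (Rle_lt_dec 0 b) as [Hb | Hb].
  - rewrite Rabs_right in * by lra.
    eapply Rle_trans; [apply Rmin_l |]. specialize (H1 b Hs).
    replace (a, b) with (vadd (1, 0) (vscal b (-1, 1))); auto.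
    unfold vadd, vscal; simpl. f_equal; lra.
  - rewrite Rabs_left in * by lra.
    eapply Rle_trans; [apply Rmin_r |]. specialize (H2 (- b) Hs).
    replace (a, b) with (vadd (1, 0) (vscal (- b) (-1, -1))); auto.
    unfold vadd, vscal; simpl. f_equal; lra.
Qed.

Lemma norm_ge_eucl : exists m, 0 < m /\ forall p, m * eucl p <= N p.
Proof.
  destruct norm_l1_sphere_lower as [m [Hm Hsph]].
  exists m. split; auto.
  assert (Hhalf : forall p, 0 <= fst p -> m * eucl p <= N p).
  { intros [a b] Ha. simpl in Ha. pose proof (eucl_le_l1 (a, b)) as Hl1; simpl in Hl1.
    set (L := Rabs a + Rabs b) in Hl1.
    destruct (Req_dec L 0) as [HL | HL].
    { assert (a = 0 /\ b = 0) as [-> ->]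
        by (unfold L in HL; pose proof (Rabs_pos a); pose proof (Rabs_pos b);
            split; apply Rabs_eq_0; lra).
      rewrite eucl_00, norm_00. lra. }
    assert (HLp : 0 < L) by (unfold L in *; pose proof (Rabs_pos a); pose proof (Rabs_pos b); lra).
    assert (Hsc : m <= N (vscal (/ L) (a, b))).
    { apply Hsph; simpl.
      - apply Rmult_le_pos; [apply Rlt_le, Rinv_0_lt_compat |]; lra.
      - rewrite Rabs_mult, Rabs_right by (apply Rle_ge, Rlt_le, Rinv_0_lt_compat; lra).
        unfold L in *. rewrite (Rabs_right a) in * by lra. field. lra. }
    rewrite norm_scal, Rabs_right in Hsc by (apply Rle_ge, Rlt_le, Rinv_0_lt_compat; lra).
    apply Rmult_le_compat_l with (r := L) in Hsc; [| lra].
    rewrite <- Rmult_assoc, Rinv_r, Rmult_1_l in Hsc by lra. nra. }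
  intro p. destruct (Rle_lt_dec 0 (fst p)) as [Hp | Hp]; [auto |].
  rewrite <- norm_opp.
  replace (eucl p) with (eucl (vscal (-1) p))
    by (unfold eucl, vscal; simpl; f_equal; ring).
  apply Hhalf. simpl. lra.
Qed.

End NormOnPlane.

(** * Self-contraction keeps angles away from pi *)

Lemma one_add_cos_lower (P a b m M : R) : 0 < m -> 0 < M -> 0 <= P ->
  a ^ 2 + b ^ 2 = P ^ 2 -> (a < 0 -> m * (- a) <= M * Rabs b) ->
  m ^ 2 / (2 * (M ^ 2 + m ^ 2)) * P <= P + a.
Proof.
  intros Hm HM HP Hcirc Hab.
  assert (Hk : m ^ 2 / (2 * (M ^ 2 + m ^ 2)) * (2 * (M ^ 2 + m ^ 2)) = m ^ 2)
    by (field; nra).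
  assert (Hk0 : 0 <= m ^ 2 / (2 * (M ^ 2 + m ^ 2))) by (apply Rdiv_le_0_compat; nra).
  assert (HaP : Rabs a <= P).
  { apply Rsqr_incr_0_var; auto. rewrite <- Rsqr_abs. unfold Rsqr. nra. }
  assert (Hk1 : m ^ 2 / (2 * (M ^ 2 + m ^ 2)) <= 1 / 2)
    by (apply Rmult_le_reg_r with (2 * (M ^ 2 + m ^ 2)); nra).
  destruct (Rle_lt_dec 0 a) as [Ha | Ha]; [nra |].
  specialize (Hab Ha). rewrite Rabs_left in HaP by lra.
  assert (Hb : m ^ 2 * a ^ 2 <= M ^ 2 * b ^ 2).
  { rewrite <- (pow2_abs b).
    assert (Hsq : (m * - a) ^ 2 <= (M * Rabs b) ^ 2) by (apply pow_incr; nra). nra. }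
  (* [P + a = b^2 / (P - a) >= b^2 / (2 P)] and [b^2 >= m^2 P^2 / (M^2 + m^2)]. *)
  assert (HPa : b ^ 2 <= (P + a) * (2 * P)) by nra.
  assert (Hb2 : m ^ 2 * P ^ 2 <= (M ^ 2 + m ^ 2) * b ^ 2) by nra.
  destruct (Req_dec P 0) as [HP0 | HP0]; [lra |].
  assert (HPpos : 0 < P) by lra.
  apply Rmult_le_reg_r with (2 * P * (M ^ 2 + m ^ 2)); [apply Rmult_lt_0_compat; nra |].
  replace (m ^ 2 / (2 * (M ^ 2 + m ^ 2)) * P * (2 * P * (M ^ 2 + m ^ 2)))
    with (m ^ 2 / (2 * (M ^ 2 + m ^ 2)) * (2 * (M ^ 2 + m ^ 2)) * P * P) by ring.
  rewrite Hk. nra.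
Qed.

Section AngleGap.
Variable N : R * R -> R.
Hypothesis HN : is_norm N.
Variable m : R.
Hypothesis Hm : 0 < m.
Hypothesis Hlow : forall p, m * eucl p <= N p.

Definition angle_gap : R := m ^ 2 / (2 * (norm_ub N ^ 2 + m ^ 2)).

Lemma angle_gap_gt0 : 0 < angle_gap.
Proof. unfold angle_gap. pose proof (norm_ub_gt0 N HN). apply Rdiv_lt_0_compat; nra. Qed.

(* [(|y|^2 - y.z) y = |y|^2 (y - z) + det(y,z) perp y], so a very negative [y.z]
   would force [N (y - z) > N y]. *)
Lemma angle_gap_of_norm_sub_le y z : N (vsub y z) <= N y ->
  angle_gap * (eucl y * eucl z) <= eucl y * eucl z + dot y z.
Proof.
  intro Hyz. pose proof (norm_ub_gt0 N HN) as HM.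
  apply (one_add_cos_lower _ _ (det y z)); auto.
  - apply Rmult_le_pos; apply eucl_ge0.
  - apply dot_sq_add_det_sq.
  - intro Hneg. set (Y := eucl y ^ 2).
    assert (HY0 : 0 <= Y) by (unfold Y; nra).
    assert (E : vscal (Y - dot y z) y = vadd (vscal Y (vsub y z)) (vscal (det y z) (perp y))).
    { unfold Y. rewrite eucl_sq. unfold vscal, vadd, vsub, perp, dot, det; simpl; f_equal; ring. }
    pose proof (norm_triangle N HN (vscal Y (vsub y z)) (vscal (det y z) (perp y))) as Htri.
    rewrite <- E, !(norm_scal N HN), (Rabs_right Y), (Rabs_right (Y - dot y z)) in Htri by lra.
    pose proof (norm_le_eucl N HN (perp y)) as Hperp. rewrite eucl_perp in Hperp.
    pose proof (Hlow y); pose proof (eucl_ge0 y); pose proof (Rabs_pos (det y z)).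
    assert (Hnn : - dot y z * N y <= Rabs (det y z) * (norm_ub N * eucl y)).
    { assert (Y * N (vsub y z) <= Y * N y) by (apply Rmult_le_compat_l; auto).
      assert (Rabs (det y z) * N (perp y) <= Rabs (det y z) * (norm_ub N * eucl y))
        by (apply Rmult_le_compat_l; auto).
      nra. }
    destruct (Req_dec (eucl y) 0) as [Hy0 | Hy0].
    + apply eucl_eq0 in Hy0. subst y. unfold dot in Hneg. simpl in Hneg. lra.
    + apply Rmult_le_reg_r with (eucl y); [lra |].
      assert (m * eucl y * - dot y z <= N y * - dot y z) by (apply Rmult_le_compat_r; lra).
      nra.
Qed.

End AngleGap.

(** * Cones of future directions *)

(* [tan (theta / 2)], where [theta] is the oriented angle from [c] to [z]. *)
Definition half_tan (c z : R * R) : R := det c z / (eucl c * eucl z + dot c z).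

Lemma eucl_mul_gt0_of_cos c z : 0 < eucl c * eucl z + dot c z -> 0 < eucl c * eucl z.
Proof. intro H. pose proof (Rle_abs (dot c z)). pose proof (Rabs_dot_le c z). lra. Qed.

Lemma half_tan_param c z : 0 < eucl c * eucl z + dot c z ->
  let t := half_tan c z in
  dot c z = eucl c * eucl z * (1 - t ^ 2) / (1 + t ^ 2) /\
  det c z = 2 * (eucl c * eucl z) * t / (1 + t ^ 2).
Proof.
  intros Hpos t. pose proof (eucl_mul_gt0_of_cos c z Hpos) as Hr.
  pose proof (dot_sq_add_det_sq c z) as Hcirc.
  set (r := eucl c * eucl z) in *. set (A := dot c z) in *. set (S := det c z) in *.
  assert (Ht2 : t ^ 2 = (r - A) / (r + A)).
  { unfold t, half_tan. fold r A S. unfold Rdiv. rewrite Rpow_mult_distr, pow_inv.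
    replace (S ^ 2) with (r ^ 2 - A ^ 2) by lra. field. lra. }
  split; rewrite Ht2; [| unfold t at 1, half_tan; fold r A S]; field; lra.
Qed.

Lemma half_tan_pair_bound eps c y z :
  0 < eucl c * eucl y + dot c y -> 0 < eucl c * eucl z + dot c z ->
  eps * (eucl y * eucl z) <= eucl y * eucl z + dot y z ->
  eps * ((1 + half_tan c y ^ 2) * (1 + half_tan c z ^ 2))
    <= 2 * (1 + half_tan c y * half_tan c z) ^ 2.
Proof.
  intros Hy Hz Hyz.
  destruct (half_tan_param c y Hy) as [Ay Sy]; destruct (half_tan_param c z Hz) as [Az Sz].
  pose proof (eucl_mul_gt0_of_cos c y Hy); pose proof (eucl_mul_gt0_of_cos c z Hz).
  set (a := half_tan c y) in *; set (b := half_tan c z) in *.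
  assert (Da : 0 < 1 + a ^ 2) by nra. assert (Db : 0 < 1 + b ^ 2) by nra.
  pose proof (dot_frame c y z) as Hf. rewrite Ay, Sy, Az, Sz in Hf.
  set (ry := eucl c * eucl y) in *; set (rz := eucl c * eucl z) in *.
  assert (Hr : 0 < ry * rz) by nra.
  assert (E : eucl c ^ 2 * (eucl y * eucl z + dot y z)
              = ry * rz * (2 * (1 + a * b) ^ 2 / ((1 + a ^ 2) * (1 + b ^ 2)))).
  { rewrite Rmult_plus_distr_l, Hf. unfold ry, rz. field. lra. }
  assert (Hc : eucl c ^ 2 * (eps * (eucl y * eucl z)) = ry * rz * eps)
    by (unfold ry, rz; ring).
  assert (Hle : ry * rz * eps <= ry * rz * (2 * (1 + a * b) ^ 2 / ((1 + a ^ 2) * (1 + b ^ 2)))).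
  { rewrite <- E, <- Hc. apply Rmult_le_compat_l; auto. nra. }
  apply Rmult_le_reg_l in Hle; auto.
  apply Rmult_le_reg_r with (/ ((1 + a ^ 2) * (1 + b ^ 2))); [apply Rinv_0_lt_compat; nra |].
  rewrite Rmult_assoc, Rinv_r by nra. lra.
Qed.

Lemma half_tan_opposite c y z :
  0 < eucl c * eucl y + dot c y -> 0 < eucl c * eucl z + dot c z ->
  det y z <= 0 -> half_tan c z < half_tan c y ->
  0 <= 1 + half_tan c y * half_tan c z.
Proof.
  intros Hy Hz Hdet Hlt.
  destruct (half_tan_param c y Hy) as [Ay Sy]; destruct (half_tan_param c z Hz) as [Az Sz].
  pose proof (eucl_mul_gt0_of_cos c y Hy); pose proof (eucl_mul_gt0_of_cos c z Hz).
  set (a := half_tan c y) in *; set (b := half_tan c z) in *.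
  assert (Da : 0 < 1 + a ^ 2) by nra. assert (Db : 0 < 1 + b ^ 2) by nra.
  pose proof (det_frame c y z) as Hf. rewrite Ay, Sy, Az, Sz in Hf.
  set (ry := eucl c * eucl y) in *; set (rz := eucl c * eucl z) in *.
  assert (E : eucl c ^ 2 * det y z
              = 2 * ry * rz / ((1 + a ^ 2) * (1 + b ^ 2)) * ((b - a) * (1 + a * b))).
  { rewrite Hf. field. lra. }
  assert (Hk : 0 < 2 * ry * rz / ((1 + a ^ 2) * (1 + b ^ 2))) by (apply Rdiv_lt_0_compat; nra).
  destruct (Rle_lt_dec 0 (1 + a * b)) as [| Hab]; auto.
  assert (0 < (b - a) * (1 + a * b)) by nra.
  assert (0 < eucl c ^ 2 * det y z) by (rewrite E; apply Rmult_lt_0_compat; auto).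
  nra.
Qed.

Lemma half_tan_zero_r c : half_tan c (0, 0) = 0.
Proof. unfold half_tan, det; simpl. unfold Rdiv. ring. Qed.

Lemma half_tan_self c : half_tan c c = 0.
Proof. unfold half_tan, det. replace (fst c * snd c - snd c * fst c) with 0 by ring. unfold Rdiv. ring. Qed.

(* The sum of the unit vectors with half-angle tangents [p] and [q] in the
   orthonormal frame [(c / |c|, perp c / |c|)]. *)
Definition bisector_vector (c : R * R) (p q : R) : R * R :=
  vscal (/ eucl c)
    (vadd (vscal ((1 - p ^ 2) / (1 + p ^ 2) + (1 - q ^ 2) / (1 + q ^ 2)) c)
          (vscal (2 * p / (1 + p ^ 2) + 2 * q / (1 + q ^ 2)) (perp c))).

Lemma eucl_bisector_vector_le c p q : c <> (0, 0) -> eucl (bisector_vector c p q) <= 2.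
Proof.
  intro Hc. pose proof (eucl_gt0 c Hc) as Hpos. pose proof (eucl_sq c) as Ec.
  assert (Dp : 0 < 1 + p ^ 2) by nra. assert (Dq : 0 < 1 + q ^ 2) by nra.
  apply Rsqr_incr_0_var; [| lra]. rewrite Rsqr_pow2, eucl_sq.
  unfold bisector_vector, vscal, vadd, perp; cbn [fst snd].
  set (al := (1 - p ^ 2) / (1 + p ^ 2) + (1 - q ^ 2) / (1 + q ^ 2)).
  set (be := 2 * p / (1 + p ^ 2) + 2 * q / (1 + q ^ 2)).
  replace ((/ eucl c * (al * fst c + be * - snd c)) ^ 2 + (/ eucl c * (al * snd c + be * fst c)) ^ 2)
    with (al ^ 2 + be ^ 2)
    by (transitivity ((al ^ 2 + be ^ 2) * (fst c ^ 2 + snd c ^ 2) / eucl c ^ 2);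
        [rewrite <- Ec | ]; field; lra).
  replace (al ^ 2 + be ^ 2)
    with (2 + 2 * (((1 - p ^ 2) * (1 - q ^ 2) + 4 * p * q) / ((1 + p ^ 2) * (1 + q ^ 2))))
    by (unfold al, be; field; lra).
  assert (((1 - p ^ 2) * (1 - q ^ 2) + 4 * p * q) / ((1 + p ^ 2) * (1 + q ^ 2)) <= 1).
  { apply Rmult_le_reg_r with ((1 + p ^ 2) * (1 + q ^ 2)); [nra |].
    unfold Rdiv. rewrite Rmult_assoc, Rinv_l by nra. pose proof (pow2_ge_0 (p - q)). nra. }
  unfold Rsqr. lra.
Qed.

Lemma bisector_vector_cone eps c z p q : 0 < eucl c * eucl z + dot c z ->
  q <= half_tan c z <= p -> 0 < 1 + p * q ->
  eps * ((1 + p ^ 2) * (1 + q ^ 2)) <= 2 * (1 + p * q) ^ 2 ->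
  eps * eucl z <= dot z (bisector_vector c p q).
Proof.
  intros Hpos Ht Hpq Hext.
  destruct (half_tan_param c z Hpos) as [Az Sz].
  pose proof (eucl_mul_gt0_of_cos c z Hpos) as Hr.
  assert (Hc : 0 < eucl c) by (pose proof (eucl_ge0 c); pose proof (eucl_ge0 z); nra).
  assert (Hz : 0 < eucl z) by (pose proof (eucl_ge0 z); nra).
  set (t := half_tan c z) in *.
  assert (Dp : 0 < 1 + p ^ 2) by nra. assert (Dq : 0 < 1 + q ^ 2) by nra.
  assert (Dt : 0 < 1 + t ^ 2) by nra.
  assert (E : dot z (bisector_vector c p q) = eucl z / (1 + t ^ 2) / ((1 + p ^ 2) * (1 + q ^ 2))
     * (2 * (1 + t * p) ^ 2 * (1 + q ^ 2) + 2 * (1 + t * q) ^ 2 * (1 + p ^ 2)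
        - 2 * (1 + t ^ 2) * (1 + p ^ 2) * (1 + q ^ 2))).
  { replace (dot z (bisector_vector c p q))
      with ((((1 - p ^ 2) / (1 + p ^ 2) + (1 - q ^ 2) / (1 + q ^ 2)) * dot c z
             + (2 * p / (1 + p ^ 2) + 2 * q / (1 + q ^ 2)) * det c z) / eucl c)
      by (unfold bisector_vector, dot, det, vscal, vadd, perp; simpl; field; lra).
    rewrite Az, Sz. field. lra. }
  (* The bracket equals [2 (1 + p q)^2 (1 + t^2) + 4 (p - t) (t - q) (1 + p q)]. *)
  assert (Hkey : 2 * (1 + p * q) ^ 2 * (1 + t ^ 2) <=
    2 * (1 + t * p) ^ 2 * (1 + q ^ 2) + 2 * (1 + t * q) ^ 2 * (1 + p ^ 2)
    - 2 * (1 + t ^ 2) * (1 + p ^ 2) * (1 + q ^ 2)).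
  { assert (0 <= (p - t) * (t - q)) by nra. nra. }
  rewrite E.
  apply Rle_trans with (eucl z / (1 + t ^ 2) / ((1 + p ^ 2) * (1 + q ^ 2))
                         * (2 * (1 + p * q) ^ 2 * (1 + t ^ 2))).
  - apply Rle_trans with (eucl z / (1 + t ^ 2) / ((1 + p ^ 2) * (1 + q ^ 2))
                         * (eps * ((1 + p ^ 2) * (1 + q ^ 2)) * (1 + t ^ 2))).
    + right. field. lra.
    + apply Rmult_le_compat_l; [apply Rdiv_le_0_compat; [apply Rdiv_le_0_compat|]; nra |].
      apply Rmult_le_compat_r; lra.
  - apply Rmult_le_compat_l; [apply Rdiv_le_0_compat; [apply Rdiv_le_0_compat|]; nra | lra].
Qed.

Lemma argmax_range (f : nat -> R) lo n :
  exists k, (lo <= k <= lo + n)%nat /\ forall j, (lo <= j <= lo + n)%nat -> f j <= f k.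
Proof.
  induction n as [| n [k [Hk Hmax]]].
  - exists lo. split; [lia |]. intros j Hj. replace j with lo by lia. lra.
  - destruct (Rle_lt_dec (f (lo + S n)%nat) (f k)).
    + exists k. split; [lia |]. intros j Hj.
      destruct (Nat.eq_dec j (lo + S n)) as [-> |]; auto. apply Hmax; lia.
    + exists (lo + S n)%nat. split; [lia |]. intros j Hj.
      destruct (Nat.eq_dec j (lo + S n)) as [-> |]; [lra |].
      specialize (Hmax j ltac:(lia)). lra.
Qed.

Lemma argmin_range (f : nat -> R) lo n :
  exists k, (lo <= k <= lo + n)%nat /\ forall j, (lo <= j <= lo + n)%nat -> f k <= f j.
Proof.
  destruct (argmax_range (fun j => - f j) lo n) as [k [Hk H]]. exists k. split; auto.
  intros j Hj. specialize (H j Hj). lra.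
Qed.

Section Cone.
Variable N : R * R -> R.
Hypothesis HN : is_norm N.
Variable eps : R.
Hypothesis Heps : 0 < eps.
Variable z : nat -> R * R.
Variables lo n : nat.
Let c := z (lo + n).
Hypothesis Hlast : forall k, (lo <= k <= lo + n)%nat -> N (vsub c (z k)) <= N c.
Hypothesis Hpair : forall k l, (lo <= k <= lo + n)%nat -> (lo <= l <= lo + n)%nat ->
  eps * (eucl (z k) * eucl (z l)) <= eucl (z k) * eucl (z l) + dot (z k) (z l).

(* Otherwise the point of the segment [z k, z l] on the line [R c] would be a
   negative multiple [w] of [c], while [N (c - w) <= N c] by convexity. *)
Lemma opposite_sides_det_nonpos k l :
  (lo <= k <= lo + n)%nat -> (lo <= l <= lo + n)%nat ->
  0 < det c (z k) -> det c (z l) < 0 -> det (z k) (z l) <= 0.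
Proof.
  intros Hk Hl HS1 HS2.
  destruct (Rle_lt_dec (det (z k) (z l)) 0) as [| Hd]; auto. exfalso.
  set (S1 := det c (z k)) in *. set (S2 := det c (z l)) in *.
  set (th1 := - S2 / (S1 - S2)). set (th2 := S1 / (S1 - S2)).
  assert (Hth1 : 0 < th1) by (unfold th1; apply Rdiv_lt_0_compat; lra).
  assert (Hth2 : 0 < th2) by (unfold th2; apply Rdiv_lt_0_compat; lra).
  assert (Hth : th1 + th2 = 1) by (unfold th1, th2; field; lra).
  set (w := vadd (vscal th1 (z k)) (vscal th2 (z l))).
  assert (Hc : c <> (0, 0)).
  { intro E. unfold S1 in HS1. rewrite E in HS1. unfold det in HS1. simpl in HS1. lra. }
  assert (Hnorm : N (vsub c w) <= N c).
  { replace (vsub c w) with (vadd (vscal th1 (vsub c (z k))) (vscal th2 (vsub c (z l))))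
      by (unfold w; replace th2 with (1 - th1) by lra;
          unfold vsub, vadd, vscal; simpl; f_equal; ring).
    eapply Rle_trans; [apply (norm_triangle N HN) |].
    rewrite !(norm_scal N HN), !Rabs_right by lra.
    pose proof (Hlast k Hk); pose proof (Hlast l Hl). nra. }
  assert (Hdw : det c w = 0)
    by (transitivity (th1 * S1 + th2 * S2);
        [unfold w, S1, S2, det, vadd, vscal; simpl; ring | unfold th1, th2; field; lra]).
  assert (Haw : dot c w < 0).
  { pose proof (det_frame c (z k) (z l)) as Hfd. fold S1 S2 in Hfd.
    pose proof (eucl_gt0 c Hc).
    replace (dot c w) with ((S1 * dot c (z l) - S2 * dot c (z k)) / (S1 - S2))
      by (unfold w, th1, th2, dot, vadd, vscal; simpl; field; lra).
    assert (0 < eucl c ^ 2 * det (z k) (z l)) by (apply Rmult_lt_0_compat; nra).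
    apply Rdiv_neg_pos; lra. }
  set (lam := dot c w / eucl c ^ 2).
  assert (Hlam : lam < 0)
    by (unfold lam; apply Rdiv_neg_pos; auto; pose proof (eucl_gt0 c Hc); nra).
  replace (vsub c w) with (vscal (1 - lam) c) in Hnorm
    by (rewrite (det_eq0_colinear c w Hc Hdw); fold lam; unfold vsub, vscal; simpl; f_equal; ring).
  rewrite (norm_scal N HN), Rabs_right in Hnorm by lra.
  pose proof (norm_gt0 N HN c Hc). nra.
Qed.

Lemma cos_with_last_gt0 k : (lo <= k <= lo + n)%nat -> c <> (0, 0) -> z k <> (0, 0) ->
  0 < eucl c * eucl (z k) + dot c (z k).
Proof.
  intros Hk Hc Hz. pose proof (Hpair k (lo + n) Hk ltac:(lia)) as H. fold c in H.
  rewrite dot_comm, (Rmult_comm (eucl c)).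
  pose proof (eucl_gt0 _ Hc); pose proof (eucl_gt0 _ Hz).
  assert (0 < eps * (eucl (z k) * eucl c)) by (apply Rmult_lt_0_compat; [| apply Rmult_lt_0_compat]; auto).
  lra.
Qed.

Lemma half_tan_nonzero_witness k : (lo <= k <= lo + n)%nat -> c <> (0, 0) ->
  exists k', (lo <= k' <= lo + n)%nat /\ z k' <> (0, 0) /\ half_tan c (z k') = half_tan c (z k).
Proof.
  intros Hk Hc. destruct (vec_eq_dec (z k) (0, 0)) as [E |]; [| eauto].
  exists (lo + n)%nat. split; [lia |]. split; [exact Hc |].
  fold c. rewrite E, half_tan_self, half_tan_zero_r. reflexivity.
Qed.

Lemma half_tan_extremes k l : (lo <= k <= lo + n)%nat -> (lo <= l <= lo + n)%nat ->
  c <> (0, 0) -> z k <> (0, 0) -> z l <> (0, 0) ->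
  half_tan c (z l) <= 0 <= half_tan c (z k) ->
  0 < 1 + half_tan c (z k) * half_tan c (z l).
Proof.
  intros Hk Hl Hc Hzk Hzl [Htl Htk].
  pose proof (cos_with_last_gt0 k Hk Hc Hzk) as Pk; pose proof (cos_with_last_gt0 l Hl Hc Hzl) as Pl.
  destruct (Req_dec (half_tan c (z k)) 0) as [-> | Hk0]; [lra |].
  destruct (Req_dec (half_tan c (z l)) 0) as [-> | Hl0]; [lra |].
  assert (Hdet : det (z k) (z l) <= 0).
  { destruct (half_tan_param c (z k) Pk) as [_ Sk]; destruct (half_tan_param c (z l) Pl) as [_ Sl].
    pose proof (eucl_mul_gt0_of_cos c (z k) Pk); pose proof (eucl_mul_gt0_of_cos c (z l) Pl).
    apply opposite_sides_det_nonpos; auto; fold c; [rewrite Sk | rewrite Sl].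
    - apply Rdiv_lt_0_compat; nra.
    - apply Rdiv_neg_pos; nra. }
  destruct (half_tan_opposite c (z k) (z l) Pk Pl Hdet ltac:(lra)) as [| E]; auto.
  pose proof (half_tan_pair_bound eps c (z k) (z l) Pk Pl (Hpair k l Hk Hl)) as Hb.
  rewrite <- E in Hb. exfalso.
  assert (0 < eps * ((1 + half_tan c (z k) ^ 2) * (1 + half_tan c (z l) ^ 2)))
    by (apply Rmult_lt_0_compat; [| apply Rmult_lt_0_compat]; nra).
  simpl in Hb. lra.
Qed.

Lemma common_cone_direction : exists u, eucl u <= 2 /\
  forall k, (lo <= k <= lo + n)%nat -> eps * eucl (z k) <= dot (z k) u.
Proof.
  destruct (vec_eq_dec c (0, 0)) as [Hc0 | Hc].
  - exists (0, 0). rewrite eucl_00. split; [lra |]. intros k Hk.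
    pose proof (Hlast k Hk) as H. rewrite Hc0, (norm_00 N HN) in H.
    pose proof (norm_ge0 N HN (vsub (0, 0) (z k))).
    assert (E : vsub (0, 0) (z k) = (0, 0)) by (apply (norm_eq0 N HN); lra).
    replace (z k) with (0, 0)
      by (destruct (z k); unfold vsub in E; simpl in E; injection E; intros; f_equal; lra).
    rewrite eucl_00. unfold dot; simpl. lra.
  - set (t := fun k => half_tan c (z k)).
    destruct (argmax_range t lo n) as [p [Hp Hpmax]].
    destruct (argmin_range t lo n) as [q [Hq Hqmin]].
    assert (Htp : 0 <= t p)
      by (replace 0 with (t (lo + n)%nat) by apply half_tan_self; apply Hpmax; lia).
    assert (Htq : t q <= 0)
      by (replace 0 with (t (lo + n)%nat) by apply half_tan_self; apply Hqmin; lia).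
    destruct (half_tan_nonzero_witness p Hp Hc) as [p' [Hp' [Hzp Ep]]].
    destruct (half_tan_nonzero_witness q Hq Hc) as [q' [Hq' [Hzq Eq]]].
    pose proof (half_tan_pair_bound eps c (z p') (z q') (cos_with_last_gt0 p' Hp' Hc Hzp)
      (cos_with_last_gt0 q' Hq' Hc Hzq) (Hpair p' q' Hp' Hq')) as Hext.
    pose proof (half_tan_extremes p' q' Hp' Hq' Hc Hzp Hzq) as Hmul.
    fold (t p') (t q') in *. rewrite Ep, Eq in Hext, Hmul. specialize (Hmul (conj Htq Htp)).
    exists (bisector_vector c (t p) (t q)). split; [apply eucl_bisector_vector_le; auto |].
    intros k Hk. destruct (vec_eq_dec (z k) (0, 0)) as [-> | Hzk].
    + rewrite eucl_00. unfold dot; simpl. lra.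
    + apply bisector_vector_cone; auto.
      * apply cos_with_last_gt0; auto.
      * split; [apply Hqmin | apply Hpmax]; auto.
Qed.

End Cone.

(** * The support-function potential *)

Fixpoint rsum (f : nat -> R) (n : nat) : R :=
  match n with O => 0 | S n' => rsum f n' + f n' end.

Lemma rsum_le f g n : (forall i, (i < n)%nat -> f i <= g i) -> rsum f n <= rsum g n.
Proof.
  induction n as [| n IH]; simpl; intros H; [lra |].
  pose proof (H n ltac:(lia)). assert (rsum f n <= rsum g n) by (apply IH; auto). lra.
Qed.

Lemma rsum_sub f g n : rsum (fun i => f i - g i) n = rsum f n - rsum g n.
Proof. induction n as [| n IH]; simpl; [ring | rewrite IH; ring]. Qed.

Lemma rsum_scal a f n : rsum (fun i => a * f i) n = a * rsum f n.
Proof. induction n as [| n IH]; simpl; [ring | rewrite IH; ring]. Qed.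

Lemma rsum_const a n : rsum (fun _ => a) n = INR n * a.
Proof. induction n as [| n IH]; simpl rsum; [simpl; ring | rewrite IH, S_INR; ring]. Qed.

Lemma rsum_telescope (F : nat -> R) n : rsum (fun j => F j - F (S j)) n = F O - F n.
Proof. induction n as [| n IH]; simpl; [ring | rewrite IH; ring]. Qed.

Lemma rsum_shift f n : rsum f (S n) = f O + rsum (fun j => f (S j)) n.
Proof. induction n as [| n IH]; simpl in *; [ring | rewrite IH; ring]. Qed.

Lemma rsum_ge0 f n : (forall i, (i < n)%nat -> 0 <= f i) -> 0 <= rsum f n.
Proof.
  induction n as [| n IH]; simpl; intros H; [lra |].
  pose proof (H n ltac:(lia)). assert (0 <= rsum f n) by (apply IH; auto). lra.
Qed.

Lemma rsum_ge_term f n i : (forall j, (j < n)%nat -> 0 <= f j) -> (i < n)%nat ->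
  f i <= rsum f n.
Proof.
  induction n as [| n IH]; simpl; intros H Hi; [lia |].
  destruct (Nat.eq_dec i n) as [-> | Hne].
  - pose proof (rsum_ge0 f n ltac:(auto)). lra.
  - pose proof (H n ltac:(lia)). assert (f i <= rsum f n) by (apply IH; auto; lia). lra.
Qed.

Section TailSupport.
Variable x : nat -> R * R.
Variable n : nat.

Fixpoint max_dot (w : R * R) (j r : nat) : R :=
  match r with
  | O => dot (x j) w
  | S r' => Rmax (dot (x j) w) (max_dot w (S j) r')
  end.

Lemma max_dot_ge w r : forall j k, (j <= k <= j + r)%nat -> dot (x k) w <= max_dot w j r.
Proof.
  induction r as [| r IH]; intros j k Hk; simpl.
  - replace k with j by lia. lra.
  - destruct (Nat.eq_dec k j) as [-> |]; [apply Rmax_l |].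
    eapply Rle_trans; [| apply Rmax_r]. apply IH; lia.
Qed.

Lemma max_dot_le w r B : forall j,
  (forall k, (j <= k <= j + r)%nat -> dot (x k) w <= B) -> max_dot w j r <= B.
Proof.
  induction r as [| r IH]; intros j H; simpl; [apply H; lia |].
  apply Rmax_lub; [apply H; lia | apply IH; intros; apply H; lia].
Qed.

Lemma max_dot_attained w r : forall j,
  exists k, (j <= k <= j + r)%nat /\ max_dot w j r = dot (x k) w.
Proof.
  induction r as [| r IH]; intros j; simpl; [exists j; split; [lia | auto] |].
  destruct (IH (S j)) as [k [Hk E]]. unfold Rmax.
  destruct (Rle_dec (dot (x j) w) (max_dot w (S j) r)); [exists k | exists j]; split; auto; lia.
Qed.

Definition tail_support (w : R * R) (j : nat) : R := max_dot w j (n - j).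

Lemma tail_support_ge w j k : (j <= k <= n)%nat -> dot (x k) w <= tail_support w j.
Proof. intro H. apply max_dot_ge. lia. Qed.

Lemma tail_support_le w j B : (j <= n)%nat ->
  (forall k, (j <= k <= n)%nat -> dot (x k) w <= B) -> tail_support w j <= B.
Proof. intros Hj H. apply max_dot_le. intros k Hk. apply H. lia. Qed.

Lemma tail_support_attained w j : (j <= n)%nat ->
  exists k, (j <= k <= n)%nat /\ tail_support w j = dot (x k) w.
Proof.
  intro Hj. destruct (max_dot_attained w (n - j) j) as [k [Hk E]]. exists k. split; auto. lia.
Qed.

Lemma tail_support_last w : tail_support w n = dot (x n) w.
Proof. unfold tail_support. rewrite Nat.sub_diag. reflexivity. Qed.

Lemma tail_support_antitone w j : (j < n)%nat -> tail_support w (S j) <= tail_support w j.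
Proof.
  intro Hj. unfold tail_support. replace (n - j)%nat with (S (n - S j)) by lia. apply Rmax_r.
Qed.

End TailSupport.

Definition polygon_length (x : nat -> R * R) (n : nat) : R :=
  rsum (fun j => eucl (vsub (x j) (x (S j)))) n.

Definition self_contracted_seq (N : R * R -> R) (x : nat -> R * R) (n : nat) : Prop :=
  forall i j k, (i <= j)%nat -> (j <= k)%nat -> (k <= n)%nat ->
    N (vsub (x j) (x k)) <= N (vsub (x i) (x k)).

Lemma grid_approx (d : R) (K : nat) (s : R) : 0 < d -> 0 <= s <= INR K * d ->
  exists a, (a <= K)%nat /\ Rabs (s - INR a * d) <= d.
Proof.
  intros Hd. induction K as [| K IH]; intros Hs.
  - exists O. split; [lia |]. simpl in *. rewrite Rmult_0_l, Rminus_0_r, Rabs_right; lra.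
  - destruct (Rle_lt_dec s (INR K * d)).
    + destruct IH as [a [Ha Hb]]; [lra |]. exists a. split; [lia | auto].
    + exists (S K). split; [lia |]. rewrite S_INR in *. apply Rabs_le. lra.
Qed.

Section SelfContractedSeq.
Variable N : R * R -> R.
Hypothesis HN : is_norm N.
Variable m : R.
Hypothesis Hm : 0 < m.
Hypothesis Hlow : forall p, m * eucl p <= N p.
Variable x : nat -> R * R.
Variable n : nat.
Hypothesis Hsc : self_contracted_seq N x n.

Let e := angle_gap N m.

Lemma norm_sub_le_of_sc i j k : (i <= j <= k)%nat -> (k <= n)%nat ->
  N (vsub (vsub (x k) (x i)) (vsub (x j) (x i))) <= N (vsub (x k) (x i)).
Proof.
  intros Hij Hk.
  replace (vsub (vsub (x k) (x i)) (vsub (x j) (x i))) with (vsub (x k) (x j))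
    by (unfold vsub; simpl; f_equal; ring).
  rewrite (norm_vsub_comm N HN (x k) (x j)), (norm_vsub_comm N HN (x k) (x i)).
  apply Hsc; lia.
Qed.

Lemma future_cone j : (j < n)%nat -> exists u, eucl u <= 2 /\
  forall k, (S j <= k <= n)%nat -> e * eucl (vsub (x k) (x j)) <= dot (vsub (x k) (x j)) u.
Proof.
  intro Hj. assert (En : (S j + (n - S j))%nat = n) by lia.
  destruct (common_cone_direction N HN e (angle_gap_gt0 N HN m Hm)
              (fun k => vsub (x k) (x j)) (S j) (n - S j)) as [u [Hu Hcone]];
    rewrite ?En in *.
  - intros k Hk. apply norm_sub_le_of_sc; lia.
  - intros k l Hk Hl. destruct (Nat.le_ge_cases k l).
    + rewrite dot_comm, (Rmult_comm (eucl (vsub (x k) (x j)))).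
      apply (angle_gap_of_norm_sub_le N HN m Hm Hlow). apply norm_sub_le_of_sc; lia.
    + apply (angle_gap_of_norm_sub_le N HN m Hm Hlow). apply norm_sub_le_of_sc; lia.
  - exists u. split; auto.
Qed.

Lemma step_le_future j k : (S j <= k <= n)%nat ->
  m * eucl (vsub (x (S j)) (x j)) <= 2 * norm_ub N * eucl (vsub (x k) (x j)).
Proof.
  intro Hk.
  pose proof (norm_triangle N HN (vsub (x (S j)) (x k)) (vsub (x k) (x j))) as Htri.
  replace (vadd (vsub (x (S j)) (x k)) (vsub (x k) (x j))) with (vsub (x (S j)) (x j)) in Htri
    by (unfold vadd, vsub; simpl; f_equal; ring).
  assert (N (vsub (x (S j)) (x k)) <= N (vsub (x j) (x k))) by (apply Hsc; lia).
  rewrite (norm_vsub_comm N HN (x j) (x k)) in *.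
  pose proof (Hlow (vsub (x (S j)) (x j))); pose proof (norm_le_eucl N HN (vsub (x k) (x j))).
  lra.
Qed.

Section Grid.
Variable del : R.
Variable K : nat.
Hypothesis Hdel : 0 < del.
Hypothesis HKdel : INR K * del = 4.
Hypothesis Hdel_small : 2 * del <= e / 2.

Definition grid (a b : nat) : R * R := (-2 + INR a * del, -2 + INR b * del).

Lemma grid_l1_le a b : (a <= K)%nat -> (b <= K)%nat ->
  Rabs (fst (grid a b)) + Rabs (snd (grid a b)) <= 4.
Proof.
  intros Ha Hb. apply le_INR in Ha, Hb. pose proof (pos_INR a); pose proof (pos_INR b).
  assert (INR a * del <= 4) by (rewrite <- HKdel; apply Rmult_le_compat_r; lra).
  assert (INR b * del <= 4) by (rewrite <- HKdel; apply Rmult_le_compat_r; lra).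
  assert (0 <= INR a * del) by nra. assert (0 <= INR b * del) by nra.
  unfold grid; simpl.
  assert (Rabs (-2 + INR a * del) <= 2) by (apply Rabs_le; lra).
  assert (Rabs (-2 + INR b * del) <= 2) by (apply Rabs_le; lra). lra.
Qed.

Lemma grid_near u : eucl u <= 2 -> exists a b, (a <= K)%nat /\ (b <= K)%nat /\
  Rabs (fst (grid a b) + fst u) <= del /\ Rabs (snd (grid a b) + snd u) <= del.
Proof.
  intro Hu.
  pose proof (Rabs_fst_le_eucl u) as H1; pose proof (Rabs_snd_le_eucl u) as H2.
  apply Rabs_le_between in H1, H2.
  destruct (grid_approx del K (2 - fst u) Hdel) as [a [Ha Ea]]; [lra |].
  destruct (grid_approx del K (2 - snd u) Hdel) as [b [Hb Eb]]; [lra |].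
  exists a, b. unfold grid; simpl. rewrite <- Rabs_Ropp in Ea, Eb.
  repeat split; auto; [replace (-2 + INR a * del + fst u) with (- (2 - fst u - INR a * del))
    | replace (-2 + INR b * del + snd u) with (- (2 - snd u - INR b * del))]; auto; ring.
Qed.

Let kap := e / 2 * (m / (2 * norm_ub N)).

(* For [k > j]: [x k . w = x j . w - z . u + z . (w + u) <= x j . w - (e / 2) |z|]
   with [z = x k - x j], and [(e / 2) |z|] dominates the step [x j -> x (S j)]. *)
Lemma support_drop j u w : (j < n)%nat ->
  (forall k, (S j <= k <= n)%nat -> e * eucl (vsub (x k) (x j)) <= dot (vsub (x k) (x j)) u) ->
  Rabs (fst w + fst u) <= del -> Rabs (snd w + snd u) <= del ->
  tail_support x n w (S j) <= dot (x j) w - kap * eucl (vsub (x j) (x (S j))).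
Proof.
  intros Hj Hcone Hw1 Hw2. pose proof (norm_ub_gt0 N HN) as HM.
  apply tail_support_le; [lia |]. intros k Hk.
  specialize (Hcone k ltac:(lia)). set (z := vsub (x k) (x j)) in *.
  replace (dot (x k) w) with (dot (x j) w - dot z u + dot z (vadd w u))
    by (unfold z, dot, vsub, vadd; simpl; ring).
  pose proof (dot_le_eucl_l1 z (vadd w u)) as Hwu. simpl in Hwu.
  pose proof (eucl_ge0 z).
  assert (eucl z * (Rabs (fst w + fst u) + Rabs (snd w + snd u)) <= eucl z * (2 * del))
    by (apply Rmult_le_compat_l; lra).
  pose proof (step_le_future j k ltac:(lia)) as Hfar. fold z in Hfar.
  rewrite (eucl_vsub_comm (x j)).
  assert (kap * eucl (vsub (x (S j)) (x j)) <= e / 2 * eucl z).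
  { unfold kap. apply Rmult_le_reg_r with (2 * norm_ub N); [lra |].
    replace (e / 2 * (m / (2 * norm_ub N)) * eucl (vsub (x (S j)) (x j)) * (2 * norm_ub N))
      with (e / 2 * (m * eucl (vsub (x (S j)) (x j)))) by (field; lra).
    replace (e / 2 * eucl z * (2 * norm_ub N)) with (e / 2 * (2 * norm_ub N * eucl z)) by ring.
    apply Rmult_le_compat_l; [pose proof (angle_gap_gt0 N HN m Hm : 0 < e); lra | auto]. }
  nra.
Qed.

Definition potential (j : nat) : R :=
  rsum (fun a => rsum (fun b => tail_support x n (grid a b) j) (S K)) (S K).

Lemma potential_drop j : (j < n)%nat ->
  kap * eucl (vsub (x j) (x (S j))) <= potential j - potential (S j).
Proof.
  intro Hj.
  destruct (future_cone j Hj) as [u [Hu Hcone]].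
  destruct (grid_near u Hu) as [a [b [Ha [Hb [Hw1 Hw2]]]]].
  pose proof (support_drop j u (grid a b) Hj Hcone Hw1 Hw2) as Hdrop.
  pose proof (tail_support_ge x n (grid a b) j j ltac:(lia)).
  assert (Hmono : forall w, 0 <= tail_support x n w j - tail_support x n w (S j))
    by (intro w; pose proof (tail_support_antitone x n w j Hj); lra).
  unfold potential. rewrite <- rsum_sub.
  eapply Rle_trans; [| apply rsum_ge_term with (i := a); [| lia]].
  - rewrite <- rsum_sub.
    eapply Rle_trans; [| apply rsum_ge_term with (i := b); [| lia]].
    + lra.
    + intros; apply Hmono.
  - intros i Hi. rewrite <- rsum_sub. apply rsum_ge0. intros; apply Hmono.
Qed.

Lemma potential_range D : (forall i k, (i <= n)%nat -> (k <= n)%nat -> eucl (vsub (x i) (x k)) <= D) ->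
  potential O - potential n <= INR (S K) * (INR (S K) * 4) * D.
Proof.
  intro HD. unfold potential. rewrite <- rsum_sub.
  replace (INR (S K) * (INR (S K) * 4) * D) with (rsum (fun _ => INR (S K) * (4 * D)) (S K))
    by (rewrite rsum_const; ring).
  apply rsum_le. intros a Ha. rewrite <- rsum_sub.
  replace (INR (S K) * (4 * D)) with (rsum (fun _ => 4 * D) (S K)) by (rewrite rsum_const; ring).
  apply rsum_le. intros b Hb.
  destruct (tail_support_attained x n (grid a b) O ltac:(lia)) as [k [Hk ->]].
  rewrite tail_support_last.
  replace (dot (x k) (grid a b) - dot (x n) (grid a b)) with (dot (vsub (x k) (x n)) (grid a b))
    by (unfold dot, vsub; simpl; ring).
  eapply Rle_trans; [apply dot_le_eucl_l1 |].
  pose proof (HD k n ltac:(lia) ltac:(lia)). pose proof (grid_l1_le a b ltac:(lia) ltac:(lia)).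
  pose proof (eucl_ge0 (vsub (x k) (x n))).
  pose proof (Rabs_pos (fst (grid a b))); pose proof (Rabs_pos (snd (grid a b))). nra.
Qed.

Lemma polygon_length_le_potential : kap * polygon_length x n <= potential O - potential n.
Proof.
  unfold polygon_length. rewrite <- rsum_scal, <- rsum_telescope.
  apply rsum_le. intros j Hj. apply potential_drop; auto.
Qed.

End Grid.
End SelfContractedSeq.

Lemma self_contracted_seq_length_bound N : is_norm N -> exists C, 0 < C /\
  forall x n D, self_contracted_seq N x n ->
  (forall i k, (i <= n)%nat -> (k <= n)%nat -> eucl (vsub (x i) (x k)) <= D) ->
  polygon_length x n <= C * D.
Proof.
  intro HN. destruct (norm_ge_eucl N HN) as [m [Hm Hlow]].
  set (e := angle_gap N m). pose proof (angle_gap_gt0 N HN m Hm : 0 < e) as He.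
  pose proof (norm_ub_gt0 N HN) as HM.
  set (kap := e / 2 * (m / (2 * norm_ub N))).
  assert (Hkap : 0 < kap) by (apply Rmult_lt_0_compat; [lra | apply Rdiv_lt_0_compat; lra]).
  destruct (INR_unbounded (16 / e)) as [K HK].
  assert (HK0 : 0 < INR K) by (assert (0 < 16 / e) by (apply Rdiv_lt_0_compat; lra); lra).
  set (del := 4 / INR K).
  assert (Hdel : 0 < del) by (apply Rdiv_lt_0_compat; lra).
  assert (HKdel : INR K * del = 4) by (unfold del; field; lra).
  assert (Hsmall : 2 * del <= e / 2).
  { unfold del. apply Rmult_le_reg_r with (INR K * e); [nra |].
    replace (2 * (4 / INR K) * (INR K * e)) with (8 * e) by (field; lra).
    replace (e / 2 * (INR K * e)) with (INR K * e * e / 2) by field.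
    assert (16 / e * e = 16) by (field; lra). nra. }
  exists (INR (S K) * (INR (S K) * 4) / kap). split.
  { apply Rdiv_lt_0_compat; auto. pose proof (lt_0_INR (S K) ltac:(lia)). nra. }
  intros x n D Hsc HD.
  pose proof (polygon_length_le_potential N HN m Hm Hlow x n Hsc del K Hdel HKdel Hsmall) as Hlen.
  pose proof (potential_range x n del K Hdel HKdel D HD).
  fold e kap in Hlen.
  apply Rmult_le_reg_l with kap; auto.
  replace (kap * (INR (S K) * (INR (S K) * 4) / kap * D)) with (INR (S K) * (INR (S K) * 4) * D)
    by (field; lra).
  lra.
Qed.

(** * From curves to inscribed polygons *)

Lemma poly_sum_polygon_length (g : R -> R * R) l t0 :
  poly_sum g (t0 :: l) = polygon_length (fun j => g (nth j (t0 :: l) 0)) (length l).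
Proof.
  revert t0. induction l as [| t1 l IH]; intros t0; [reflexivity |].
  change (poly_sum g (t0 :: t1 :: l)) with (eucl (vsub (g t0) (g t1)) + poly_sum g (t1 :: l)).
  rewrite IH. unfold polygon_length. simpl length. rewrite rsum_shift. reflexivity.
Qed.

Lemma StronglySorted_nth_le l i j : StronglySorted Rlt l -> (i <= j)%nat -> (j < length l)%nat ->
  nth i l 0 <= nth j l 0.
Proof.
  revert i j. induction l as [| a l IH]; intros i j HS Hij Hj; simpl in Hj; [lia |].
  apply StronglySorted_inv in HS as [HS HF].
  destruct i as [| i], j as [| j]; simpl; try lra; try lia.
  - rewrite List.Forall_forall in HF. apply Rlt_le, HF, nth_In. lia.
  - apply IH; auto; lia.
Qed.

Lemma Forall_nth_R (P : R -> Prop) l i : List.Forall P l -> (i < length l)%nat -> P (nth i l 0).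
Proof. intros H Hi. rewrite List.Forall_forall in H. apply H, nth_In. auto. Qed.

Lemma self_contracted_seq_of_sorted N I g t0 l : is_interval I -> self_contracted N I g ->
  StronglySorted Rlt (t0 :: l) -> List.Forall I (t0 :: l) ->
  self_contracted_seq N (fun j => g (nth j (t0 :: l) 0)) (length l).
Proof.
  intros HI Hsc Hs HF i j k Hij Hjk Hk. set (ts := t0 :: l).
  assert (Hlen : (k < length ts)%nat) by (simpl; lia).
  apply (Hsc (nth i ts 0) (nth k ts 0)); try (apply StronglySorted_nth_le; auto; lia).
  intros c Hc. apply (HI (nth i ts 0) (nth k ts 0)); auto; apply Forall_nth_R; auto; lia.
Qed.

Lemma hull_contains_image I g t : I t -> closed_convex_hull_image I g (g t).
Proof. intros Ht S _ _ HS. apply HS, Ht. Qed.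

Lemma diam_correct K :
  is_lub_Rbar (fun d => d = 0 \/ exists p q, K p /\ K q /\ d = eucl (vsub p q)) (diam K).
Proof. apply Lub_Rbar_correct. Qed.

Lemma curve_length_le_diam N C I g : is_interval I -> self_contracted N I g -> 0 < C ->
  (forall x n D, self_contracted_seq N x n ->
     (forall i k, (i <= n)%nat -> (k <= n)%nat -> eucl (vsub (x i) (x k)) <= D) ->
     polygon_length x n <= C * D) ->
  Rbar_le (curve_length I g) (Rbar_mult C (diam (closed_convex_hull_image I g))).
Proof.
  intros HI Hsc HC Hbound. set (K := closed_convex_hull_image I g).
  destruct (diam_correct K) as [Hub _].
  assert (H0 : Rbar_le 0 (diam K)) by (apply Hub; auto).
  destruct (diam K) as [d | |]; simpl in H0; try contradiction.
  - apply Lub_Rbar_correct. intros s [[| t0 l] [Hs [HF ->]]]; [simpl; nra |].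
    change (poly_sum g (t0 :: l) <= C * d).
    rewrite poly_sum_polygon_length. apply Hbound.
    + apply (self_contracted_seq_of_sorted N I g); auto.
    + intros i k Hi Hk. apply Hub. right.
      do 2 eexists. split; [| split; [| reflexivity]]; apply (hull_contains_image I g);
        apply Forall_nth_R; auto; simpl; lia.
  - replace (Rbar_mult C p_infty) with p_infty
      by (unfold Rbar_mult, Rbar_mult'; destruct (Rle_dec 0 C); [| lra];
          destruct (Rle_lt_or_eq_dec 0 C r); [reflexivity | lra]).
    destruct (curve_length I g); simpl; auto.
Qed.

Lemma hull_in_box I g M : (forall t, I t -> eucl (g t) <= M) ->
  forall p, closed_convex_hull_image I g p -> Rabs (fst p) <= M /\ Rabs (snd p) <= M.
Proof.
  intros HM p Hp. rewrite !Rabs_le_between.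
  apply (Hp (fun p => (-M <= fst p <= M) /\ (-M <= snd p <= M))).
  - assert (Cf : forall x : R * R, filterlim fst (locally x) (locally (fst x)))
      by (intros [a b]; apply continuous_fst).
    assert (Cs : forall x : R * R, filterlim snd (locally x) (locally (snd x)))
      by (intros [a b]; apply continuous_snd).
    repeat apply closed_and.
    + apply (closed_comp fst (fun u => -M <= u)); auto. apply closed_ge.
    + apply (closed_comp fst (fun u => u <= M)); auto. apply closed_le.
    + apply (closed_comp snd (fun u => -M <= u)); auto. apply closed_ge.
    + apply (closed_comp snd (fun u => u <= M)); auto. apply closed_le.
  - intros p1 q1 lam [[A1 A2] [A3 A4]] [[B1 B2] [B3 B4]] Hl. unfold vadd, vscal; simpl.
    split; split; nra.
  - intros t Ht. pose proof (HM t Ht).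
    pose proof (Rabs_fst_le_eucl (g t)) as H1; pose proof (Rabs_snd_le_eucl (g t)) as H2.
    rewrite Rabs_le_between in H1, H2. split; split; lra.
Qed.

Lemma diam_hull_le I g M : (forall t, I t -> eucl (g t) <= M) ->
  Rbar_le (diam (closed_convex_hull_image I g)) (Rmax 0 (4 * M)).
Proof.
  intro HM. apply diam_correct. intros s [-> | [p [q [Hp [Hq ->]]]]]; simpl; [apply Rmax_l |].
  eapply Rle_trans; [| apply Rmax_r]. eapply Rle_trans; [apply eucl_le_l1 |].
  destruct (hull_in_box I g M HM p Hp) as [P1 P2]; destruct (hull_in_box I g M HM q Hq) as [Q1 Q2].
  unfold vsub; simpl. pose proof (Rabs_triang (fst p) (- fst q)); pose proof (Rabs_triang (snd p) (- snd q)).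
  rewrite Rabs_Ropp in *. unfold Rminus. lra.
Qed.

Theorem theorem1p1 (N : R * R -> R) (HN : C2_strictly_convex_norm N) :
  exists C : R, 0 < C /\
    (forall (I : R -> Prop) (gamma : R -> R * R),
       is_interval I -> self_contracted N I gamma ->
       Rbar_le (curve_length I gamma)
               (Rbar_mult C (diam (closed_convex_hull_image I gamma)))) /\
    (forall (I : R -> Prop) (gamma : R -> R * R),
       is_interval I -> self_contracted N I gamma ->
       (exists M, forall t, I t -> eucl (gamma t) <= M) ->
       is_finite (curve_length I gamma)).
Proof.
  destruct HN as [HN _].
  destruct (self_contracted_seq_length_bound N HN) as [C [HC Hbound]].
  exists C. split; [exact HC |]. split.
  - intros I g HI Hsc. exact (curve_length_le_diam N C I g HI Hsc HC Hbound).
  - intros I g HI Hsc [M HM].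
    pose proof (curve_length_le_diam N C I g HI Hsc HC Hbound) as Hlen.
    pose proof (diam_hull_le I g M HM) as Hdiam.
    assert (Hd0 : Rbar_le 0 (diam (closed_convex_hull_image I g))) by (apply diam_correct; auto).
    assert (Hl0 : Rbar_le 0 (curve_length I g)).
    { apply Lub_Rbar_correct. exists nil. repeat constructor. }
    destruct (diam (closed_convex_hull_image I g)); simpl in Hdiam, Hd0; try contradiction.
    destruct (curve_length I g); simpl in *; try contradiction; reflexivity.
Qed.
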